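(* Let $K$ be a circle of radius $1$ and centre $O$. Let $A,B\in K$ be such that the triangle $OAB$ is positively (counter-clockwise) oriented and $\eta=\angle BOA<1/10$. Let $K_A$ and $K_B$ be the circles obtained by rotating $K$ about the points $A$ and $B$ in the negative direction by the angles $\alpha$ and $\beta$ respectively, where $0<\alpha<3\beta/4$ and $\beta<\eta$. Then one of the intersection points of $K_A$ and $K_B$ lies outside $K$, and its distance from $A$ is less than $50\eta$.
   Context: The positive direction of rotation is counter-clockwise; the negative direction is clockwise. *)

From Stdlib Require Import Reals.
Open Scope R_scope.

Definition point : Type := (R * R)%type.

Definition pdist (P Q : point) : R :=
  sqrt ((fst P - fst Q)^2 + (snd P - snd Q)^2).

Definition angle (P O Q : point) : R :=
  acos (((fst P - fst O) * (fst Q - fst O) + (snd P - snd O) * (snd Q - snd O))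
        / (pdist P O * pdist Q O)).

Definition ccw (O A B : point) : Prop :=
  (fst A - fst O) * (snd B - snd O) - (snd A - snd O) * (fst B - fst O) > 0.

Definition rotate (C : point) (t : R) (X : point) : point :=
  (fst C + cos t * (fst X - fst C) - sin t * (snd X - snd C),
   snd C + sin t * (fst X - fst C) + cos t * (snd X - snd C)).

Definition on_circle (C : point) (r : R) (X : point) : Prop := pdist X C = r.

Definition rotated_circle (P : point) (t : R) (C : point) (r : R) : point -> Prop :=
  fun X => exists Y : point, on_circle C r Y /\ X = rotate P t Y.

From Stdlib Require Import Reals Lra Psatz.
Open Scope R_scope.

(* A rigid motion puts O at the origin, A at (1, 0) and B at (cos eta, sin eta).  K_A and K_B
   are then the unit circles about the images C1, C2 of O under the two rotations, and X is
   their intersection point to the right of C1 -> C2.  In the frame attached to the direction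
   C1 -> A, the vector C2 - C1 has normal component g in [beta/5, 2 eta] and tangential
   component h = O(beta eta) (this is where alpha < 3 beta / 4 is used), which gives
   |X - A|^2 = 2 - h - 2 t g = O(eta^2) for the scale t of the perpendicular offset of X.
   Finally |X|^2 = 1 + C1.C2 + 2 t (C1 x C2) > 1, as both products are nonnegative and the
   scalar one is positive. *)

Lemma sin_cos_sq x : sin x ^ 2 + cos x ^ 2 = 1.
Proof. rewrite <- (sin2_cos2 x); unfold Rsqr; ring. Qed.

Lemma small_angle_bounds x : 0 < x <= 1/5 ->
  0 < sin x <= x /\ x - x^3/6 <= sin x /\ 1 - x^2/2 <= cos x <= 1.
Proof.
intros [x_pos x_le].
destruct (pre_sin_bound x 0 ltac:(lra) ltac:(lra)) as [sin_lb _].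
destruct (pre_cos_bound x 0 ltac:(lra) ltac:(lra)) as [cos_lb _].
unfold sin_approx, cos_approx, sin_term, cos_term in *; simpl in *.
pose proof (sin_lt_x x x_pos); pose proof (COS_bound x).
assert (x^2 <= 1/25) by nra.
assert (x^3 <= x/25) by nra.
repeat split; nra.
Qed.

Definition sqdist (P Q : point) : R := (fst P - fst Q)^2 + (snd P - snd Q)^2.

Lemma sqdist_nonneg P Q : 0 <= sqdist P Q.
Proof. unfold sqdist; apply Rplus_le_le_0_compat; apply pow2_ge_0. Qed.

Lemma on_circle_sqdist C r X : 0 <= r -> on_circle C r X <-> sqdist X C = r^2.
Proof.
intros r_ge0; unfold on_circle, pdist; fold (sqdist X C); split.
- intros <-; rewrite pow2_sqrt; [reflexivity | apply sqdist_nonneg].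
- intros ->; apply sqrt_pow2, r_ge0.
Qed.

Lemma pdist_lt_sqdist P Q d : 0 <= d -> sqdist P Q < d^2 -> pdist P Q < d.
Proof.
intros d_ge0 lt; unfold pdist; fold (sqdist P Q).
rewrite <- (sqrt_pow2 d d_ge0); apply sqrt_lt_1_alt; split; [apply sqdist_nonneg | exact lt].
Qed.

Lemma pdist_gt_sqdist P Q d : 0 <= d -> d^2 < sqdist P Q -> d < pdist P Q.
Proof.
intros d_ge0 gt; unfold pdist; fold (sqdist P Q).
rewrite <- (sqrt_pow2 d d_ge0); apply sqrt_lt_1_alt; split; [apply pow2_ge_0 | exact gt].
Qed.

Lemma sqdist_rotate C t X Y : sqdist (rotate C t X) (rotate C t Y) = sqdist X Y.
Proof.
unfold sqdist, rotate; simpl.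
transitivity ((sin t ^ 2 + cos t ^ 2) * sqdist X Y); [unfold sqdist; ring |].
now rewrite sin_cos_sq, Rmult_1_l.
Qed.

Lemma rotate_rotate_opp C t X : rotate C t (rotate C (- t) X) = X.
Proof.
destruct X as [x y]; unfold rotate; simpl; rewrite cos_neg, sin_neg.
f_equal.
- transitivity (fst C + (sin t ^ 2 + cos t ^ 2) * (x - fst C)); [ring | rewrite sin_cos_sq; ring].
- transitivity (snd C + (sin t ^ 2 + cos t ^ 2) * (y - snd C)); [ring | rewrite sin_cos_sq; ring].
Qed.

Lemma rotated_circle_of_center P t C r X :
  0 <= r -> on_circle (rotate P t C) r X -> rotated_circle P t C r X.
Proof.
intros r_ge0 onX; exists (rotate P (- t) X); split; [| now rewrite rotate_rotate_opp].
apply (on_circle_sqdist _ _ _ r_ge0) in onX; apply (on_circle_sqdist _ _ _ r_ge0).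
now rewrite <- onX, <- (sqdist_rotate P t (rotate P (- t) X) C), rotate_rotate_opp.
Qed.

Definition meet_scale (r : R) (C1 C2 : point) : R := sqrt (r^2 / sqdist C2 C1 - 1/4).

(* Of the two common points of the circles of radius [r] about [C1] and [C2], the one to the
   right of the line [C1 -> C2]. *)
Definition circle_meet (r : R) (C1 C2 : point) : point :=
  ((fst C1 + fst C2) / 2 + meet_scale r C1 C2 * (snd C2 - snd C1),
   (snd C1 + snd C2) / 2 - meet_scale r C1 C2 * (fst C2 - fst C1)).

Section CircleMeet.
Variables (r : R) (C1 C2 : point).
Hypothesis centers_close : 0 < sqdist C2 C1 <= 4 * r^2.

Lemma meet_scale_nonneg : 0 <= meet_scale r C1 C2.
Proof. apply sqrt_pos. Qed.

Lemma meet_scale_sq : meet_scale r C1 C2 ^ 2 * sqdist C2 C1 = r^2 - sqdist C2 C1 / 4.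
Proof.
unfold meet_scale; rewrite pow2_sqrt.
- field; lra.
- assert (r^2 / sqdist C2 C1 * sqdist C2 C1 = r^2) by (field; lra); nra.
Qed.

Lemma sqdist_circle_meet P :
  sqdist (circle_meet r C1 C2) P =
  r^2 + sqdist C1 P
  + ((fst C2 - fst C1) * (fst C1 - fst P) + (snd C2 - snd C1) * (snd C1 - snd P))
  + 2 * meet_scale r C1 C2
      * ((snd C2 - snd C1) * (fst C1 - fst P) - (fst C2 - fst C1) * (snd C1 - snd P)).
Proof.
pose proof meet_scale_sq as scale_sq; unfold sqdist in *; simpl.
set (t := meet_scale r C1 C2) in *.
transitivity ((fst C1 - fst P)^2 + (snd C1 - snd P)^2
  + ((fst C2 - fst C1)^2 + (snd C2 - snd C1)^2) / 4 + t^2 * ((fst C2 - fst C1)^2 + (snd C2 - snd C1)^2)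
  + ((fst C2 - fst C1) * (fst C1 - fst P) + (snd C2 - snd C1) * (snd C1 - snd P))
  + 2 * t * ((snd C2 - snd C1) * (fst C1 - fst P) - (fst C2 - fst C1) * (snd C1 - snd P))).
- field.
- rewrite scale_sq; field.
Qed.

Lemma sqdist_circle_meet_origin :
  sqdist (circle_meet r C1 C2) (0, 0) =
  r^2 + (fst C1 * fst C2 + snd C1 * snd C2)
  + 2 * meet_scale r C1 C2 * (fst C1 * snd C2 - snd C1 * fst C2).
Proof. rewrite sqdist_circle_meet; unfold sqdist; simpl; ring. Qed.

Lemma circle_meet_on_circles :
  0 <= r -> on_circle C1 r (circle_meet r C1 C2) /\ on_circle C2 r (circle_meet r C1 C2).
Proof.
intros r_ge0; split; apply on_circle_sqdist; trivial; rewrite sqdist_circle_meet;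
  unfold sqdist; ring.
Qed.

End CircleMeet.

Section CanonicalPosition.
Variables a b e : R.
Hypotheses (a_pos : 0 < a) (a_lt_b : a < 3 * b / 4) (b_lt_e : b < e) (e_small : e < 1/10).

Let C1 : point := (1 - cos a, sin a).
Let C2 : point := (cos e - cos b * cos e - sin b * sin e, sin e + sin b * cos e - cos b * sin e).

Lemma rotate_center_A : rotate (1, 0) (- a) (0, 0) = C1.
Proof. unfold rotate, C1; simpl; rewrite cos_neg, sin_neg; f_equal; ring. Qed.

Lemma rotate_center_B : rotate (cos e, sin e) (- b) (0, 0) = C2.
Proof. unfold rotate, C2; simpl; rewrite cos_neg, sin_neg; f_equal; ring. Qed.

(* Coordinates of [C2 - C1] in the orthonormal frame [(cos a, - sin a), (sin a, cos a)],
   whose first vector points from [C1] to [A = (1, 0)]. *)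
Let h : R := (1 - cos b) * cos (e + a) - sin b * sin (e + a) + 1 - cos a.
Let g : R := (1 - cos b) * sin (e + a) + sin b * cos (e + a) - sin a.

Lemma center_gap_frame :
  fst C2 - fst C1 = h * cos a + g * sin a /\ snd C2 - snd C1 = g * cos a - h * sin a.
Proof.
unfold h, g; simpl; rewrite sin_plus, cos_plus; split.
- transitivity (((1 - cos b) * cos e - sin b * sin e - 1) * (sin a ^ 2 + cos a ^ 2) + cos a).
  + rewrite sin_cos_sq; ring.
  + ring.
- transitivity (((1 - cos b) * sin e + sin b * cos e) * (sin a ^ 2 + cos a ^ 2) - sin a).
  + rewrite sin_cos_sq; ring.
  + ring.
Qed.

Lemma sqdist_centers : sqdist C2 C1 = g^2 + h^2.
Proof.
unfold sqdist; destruct center_gap_frame as [-> ->].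
transitivity ((g^2 + h^2) * (sin a ^ 2 + cos a ^ 2)); [ring | rewrite sin_cos_sq; ring].
Qed.

Lemma normal_gap_bounds : b / 5 <= g <= 2 * e.
Proof.
destruct (small_angle_bounds b ltac:(lra)) as ([sb_pos sb_le] & sb_ge & cb_ge & cb_le).
destruct (small_angle_bounds (e + a) ltac:(lra)) as ([st_pos st_le] & st_ge & ct_ge & ct_le).
destruct (small_angle_bounds a ltac:(lra)) as ([sa_pos sa_le] & _).
assert (sb_ge' : sin b >= 99/100 * b) by nra.
assert (ct_ge' : cos (e + a) >= 98/100) by nra.
unfold g; split.
- assert (0 <= (1 - cos b) * sin (e + a)) by (apply Rmult_le_pos; lra).
  assert (sin b * cos (e + a) >= 99/100 * b * (98/100)) by nra.
  lra.
- assert (0 <= (1 - cos b) * (1 - sin (e + a))) by (apply Rmult_le_pos; lra).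
  assert (0 <= sin b * (1 - cos (e + a))) by (apply Rmult_le_pos; lra).
  nra.
Qed.

Lemma tangent_gap_bound : - (3 * b * e) <= h <= 3 * b * e.
Proof.
destruct (small_angle_bounds b ltac:(lra)) as ([sb_pos sb_le] & _ & cb_ge & cb_le).
destruct (small_angle_bounds (e + a) ltac:(lra)) as ([st_pos st_le] & _ & ct_ge & ct_le).
destruct (small_angle_bounds a ltac:(lra)) as (_ & _ & ca_ge & ca_le).
assert (ct_pos : 0 <= cos (e + a)) by nra.
assert (0 <= (1 - cos b) * cos (e + a) <= b^2 / 2).
{ split; [apply Rmult_le_pos; lra | nra]. }
assert (0 <= sin b * sin (e + a) <= b * (e + a)).
{ split; [apply Rmult_le_pos; lra | apply Rmult_le_compat; lra]. }
assert (b * (e + a) <= 2 * b * e) by nra.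
assert (a^2 <= b * e) by nra.
assert (b^2 <= b * e) by nra.
unfold h; split; nra.
Qed.

Lemma centers_dot_pos : 0 < fst C1 * fst C2 + snd C1 * snd C2.
Proof.
destruct (small_angle_bounds a ltac:(lra)) as ([sa_pos sa_le] & sa_ge & ca_ge & ca_le).
destruct (small_angle_bounds b ltac:(lra)) as ([sb_pos _] & _ & _ & cb_le).
destruct (small_angle_bounds e ltac:(lra)) as ([se_pos se_le] & _ & ce_ge & ce_le).
replace (fst C1 * fst C2 + snd C1 * snd C2) with
  ((1 - cos a) * cos e * (1 - cos b) + sin a * sin e * (1 - cos b)
   + sin b * (sin a * cos e - (1 - cos a) * sin e)) by (simpl; ring).
assert (0 <= (1 - cos a) * cos e * (1 - cos b)).
{ apply Rmult_le_pos; [apply Rmult_le_pos |]; nra. }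
assert (0 <= sin a * sin e * (1 - cos b)).
{ apply Rmult_le_pos; [apply Rmult_le_pos |]; lra. }
assert (99/100 * a * (99/100) <= sin a * cos e) by (apply Rmult_le_compat; nra).
assert ((1 - cos a) * sin e <= a^2 / 2 * e) by (apply Rmult_le_compat; lra).
assert (a^2 / 2 * e <= a / 200) by nra.
assert (0 < sin b * (sin a * cos e - (1 - cos a) * sin e)) by (apply Rmult_lt_0_compat; lra).
lra.
Qed.

Lemma centers_cross_nonneg : 0 <= fst C1 * snd C2 - snd C1 * fst C2.
Proof.
destruct (small_angle_bounds a ltac:(lra)) as ([sa_pos _] & _ & _ & ca_le).
destruct (small_angle_bounds b ltac:(lra)) as ([sb_pos sb_le] & sb_ge & cb_ge & cb_le).
destruct (small_angle_bounds e ltac:(lra)) as ([se_pos se_le] & se_ge & ce_ge & ce_le).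
assert (ce_pos : 0 <= cos e) by nra.
replace (fst C1 * snd C2 - snd C1 * fst C2) with
  ((1 - cos a) * (sin e * (1 - cos b) + sin b * cos e)
   + sin a * (sin b * sin e - cos e * (1 - cos b))) by (simpl; ring).
assert (0 <= (1 - cos a) * (sin e * (1 - cos b) + sin b * cos e)).
{ apply Rmult_le_pos; [lra |].
  apply Rplus_le_le_0_compat; apply Rmult_le_pos; lra. }
assert (99/100 * b * (99/100 * e) <= sin b * sin e) by (apply Rmult_le_compat; nra).
assert (cos e * (1 - cos b) <= 1 - cos b) by nra.
assert (0 <= sin a * (sin b * sin e - cos e * (1 - cos b))) by (apply Rmult_le_pos; nra).
lra.
Qed.

Lemma centers_close : 0 < sqdist C2 C1 <= 4 * 1^2.
Proof.
pose proof normal_gap_bounds; pose proof tangent_gap_bound.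
assert (h_small : - 1 <= h <= 1) by nra.
rewrite sqdist_centers; split; nra.
Qed.

Lemma sqdist_meet_A : sqdist (circle_meet 1 C1 C2) (1, 0) = 2 - h - 2 * meet_scale 1 C1 C2 * g.
Proof.
rewrite (sqdist_circle_meet _ _ _ centers_close); destruct center_gap_frame as [-> ->].
unfold sqdist; simpl.
transitivity (1 + (1 - h - 2 * meet_scale 1 C1 C2 * g) * (sin a ^ 2 + cos a ^ 2)).
- ring.
- rewrite sin_cos_sq; ring.
Qed.

Lemma meet_sqdist_A_lt : 2 - h - 2 * meet_scale 1 C1 C2 * g < (50 * e)^2.
Proof.
pose proof normal_gap_bounds; pose proof tangent_gap_bound.
pose proof (meet_scale_sq _ _ _ centers_close) as scale_sq; rewrite sqdist_centers in scale_sq.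
pose proof (meet_scale_nonneg 1 C1 C2).
set (t := meet_scale 1 C1 C2) in *; set (L := g^2 + h^2) in *.
(* [(t g)^2 = 1 - h^2/L - g^2/4] and [t g <= 1], so [2 - h - 2 t g <= - h + 2 (1 - (t g)^2)]. *)
assert (L_ge : b^2 / 25 <= L) by (unfold L; nra).
assert (u_sq : (t * g)^2 * L = L - h^2 - g^2 * L / 4).
{ transitivity (g^2 * (t^2 * L)); [ring | rewrite scale_sq; unfold L; field]. }
assert (h^2 <= 225 * e^2 * L) by nra.
assert (g^2 <= 4 * e^2) by nra.
assert (1 - (t * g)^2 <= 226 * e^2) by nra.
assert (t * g <= 1) by nra.
assert (0 <= t * g) by (apply Rmult_le_pos; lra).
nra.
Qed.

Lemma canonical_meet :
  exists X : point,
    rotated_circle (1, 0) (- a) (0, 0) 1 X /\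
    rotated_circle (cos e, sin e) (- b) (0, 0) 1 X /\
    pdist X (0, 0) > 1 /\ pdist X (1, 0) < 50 * e.
Proof.
destruct (circle_meet_on_circles 1 C1 C2 centers_close ltac:(lra)) as [on_C1 on_C2].
exists (circle_meet 1 C1 C2); split; [| split; [| split]].
- apply rotated_circle_of_center; [lra |]; now rewrite rotate_center_A.
- apply rotated_circle_of_center; [lra |]; now rewrite rotate_center_B.
- apply Rlt_gt, pdist_gt_sqdist; [lra |].
  rewrite (sqdist_circle_meet_origin _ _ _ centers_close).
  pose proof centers_dot_pos.
  assert (0 <= meet_scale 1 C1 C2 * (fst C1 * snd C2 - snd C1 * fst C2)).
  { apply Rmult_le_pos; [apply meet_scale_nonneg | apply centers_cross_nonneg]. }
  lra.
- apply pdist_lt_sqdist; [lra |]; rewrite sqdist_meet_A; apply meet_sqdist_A_lt.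
Qed.

End CanonicalPosition.

Definition vec (P Q : point) : point := (fst Q - fst P, snd Q - snd P).

(* [Z |-> O + U Z] in complex notation. *)
Definition frame (O U Z : point) : point :=
  (fst O + fst U * fst Z - snd U * snd Z, snd O + snd U * fst Z + fst U * snd Z).

Lemma frame_origin O U : frame O U (0, 0) = O.
Proof. destruct O; unfold frame; simpl; f_equal; ring. Qed.

Lemma frame_vec_unit O A : frame O (vec O A) (1, 0) = A.
Proof. destruct O, A; unfold frame, vec; simpl; f_equal; ring. Qed.

Lemma vec_on_unit_circle O A : on_circle O 1 A -> fst (vec O A) ^ 2 + snd (vec O A) ^ 2 = 1.
Proof.
intros onA; apply (on_circle_sqdist _ _ _ Rle_0_1) in onA.
change (sqdist A O = 1); rewrite onA; ring.
Qed.

Section Frame.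
Variables O U : point.
Hypothesis U_unit : fst U ^ 2 + snd U ^ 2 = 1.

Lemma sqdist_frame Z W : sqdist (frame O U Z) (frame O U W) = sqdist Z W.
Proof.
unfold sqdist, frame; simpl.
transitivity ((fst U ^ 2 + snd U ^ 2) * sqdist Z W); [unfold sqdist; ring |].
now rewrite U_unit, Rmult_1_l.
Qed.

Lemma pdist_frame Z W : pdist (frame O U Z) (frame O U W) = pdist Z W.
Proof. unfold pdist; fold (sqdist (frame O U Z) (frame O U W)); now rewrite sqdist_frame. Qed.

Lemma frame_rotate C t X : rotate (frame O U C) t (frame O U X) = frame O U (rotate C t X).
Proof. unfold rotate, frame; simpl; f_equal; ring. Qed.

Lemma frame_rotated_circle P t C r X :
  rotated_circle P t C r X -> rotated_circle (frame O U P) t (frame O U C) r (frame O U X).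
Proof.
intros [Y [onY ->]]; exists (frame O U Y); split.
- unfold on_circle in *; now rewrite pdist_frame.
- now rewrite frame_rotate.
Qed.

End Frame.

Lemma frame_angle O A B : on_circle O 1 A -> on_circle O 1 B -> ccw O A B ->
  frame O (vec O A) (cos (angle B O A), sin (angle B O A)) = B.
Proof.
intros onA onB ccw_OAB.
pose proof (vec_on_unit_circle O A onA) as A_unit; pose proof (vec_on_unit_circle O B onB) as B_unit.
unfold angle; rewrite onA, onB, Rmult_1_r, Rdiv_1_r.
destruct O as [o1 o2], A as [a1 a2], B as [b1 b2]; unfold ccw, vec, frame in *; cbn [fst snd] in *.
set (p := a1 - o1) in *; set (q := a2 - o2) in *; set (r := b1 - o1) in *; set (s := b2 - o2) in *.
set (c := r * p + s * q); set (d := p * s - q * r).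
assert (cd_unit : c^2 + d^2 = 1).
{ transitivity ((p^2 + q^2) * (r^2 + s^2)); [unfold c, d; ring | rewrite A_unit, B_unit; ring]. }
assert (c_range : -1 <= c <= 1) by nra.
rewrite cos_acos, sin_acos by exact c_range.
replace (1 - c²) with (d^2) by (unfold Rsqr; lra).
rewrite sqrt_pow2 by (unfold d; lra).
f_equal.
- transitivity (o1 + r * (p^2 + q^2)); [unfold c, d; ring | rewrite A_unit; unfold r; ring].
- transitivity (o2 + s * (p^2 + q^2)); [unfold c, d; ring | rewrite A_unit; unfold s; ring].
Qed.

Theorem lemma3 (O A B : point) (alpha beta : R) :
  on_circle O 1 A -> on_circle O 1 B ->
  ccw O A B ->
  angle B O A < 1/10 ->
  0 < alpha -> alpha < 3 * beta / 4 -> beta < angle B O A ->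
  exists X : point,
    rotated_circle A (- alpha) O 1 X /\
    rotated_circle B (- beta) O 1 X /\
    pdist X O > 1 /\
    pdist X A < 50 * angle B O A.
Proof.
intros onA onB ccw_OAB eta_small alpha_pos alpha_lt beta_lt.
pose proof (vec_on_unit_circle O A onA) as U_unit.
destruct (canonical_meet alpha beta (angle B O A) alpha_pos alpha_lt beta_lt eta_small)
  as (X & on_KA & on_KB & X_out & X_near).
exists (frame O (vec O A) X).
apply (frame_rotated_circle O (vec O A) U_unit) in on_KA, on_KB.
rewrite <- (pdist_frame O (vec O A) U_unit) in X_out, X_near.
rewrite frame_origin in on_KA, on_KB, X_out; rewrite frame_vec_unit in on_KA, X_near.
rewrite frame_angle in on_KB by assumption.
auto.
Qed.
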